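(* Let $\gamma>0$ and $\beta:\mathcal S\to(0,+\infty)$ of class $\mathcal C^1$ satisfy $x\beta_x(x,y)+\beta(x,y)>0$ for all $(x,y)\in\mathcal S$. Consider the uncontrolled BF-SIR model with initial condition $(x_0,y_0)\in\mathcal S$, $y_0>0$. Then: (i) if $R(x_0,y_0)\le1$, then $t\mapsto y(t)$ is strictly decreasing on $[0,\infty)$; (ii) if $R(x_0,y_0)>1$, then there exists a finite time $\hat t$ such that $t\mapsto y(t)$ is strictly increasing on $[0,\hat t]$ and strictly decreasing on $[\hat t,\infty)$.
   Context: $\mathcal S=\{(x,y)\in\mathbb R^2_+: x+y\le1\}$. Reproduction number $R(x,y)=\frac1\gamma\beta(x,y)x$. The uncontrolled BF-SIR model is $\dot x=-\gamma R(x,y)y$, $\dot y=\gamma(R(x,y)-1)y$; for every initial condition in $\mathcal S$ it has a unique $\mathcal C^1$ solution remaining in $\mathcal S$. *)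

From Stdlib Require Import Reals.
From Coquelicot Require Import Coquelicot.
Open Scope R_scope.

Definition inS (x y : R) : Prop := 0 <= x /\ 0 <= y /\ x + y <= 1.

Definition Rnum (gamma : R) (beta : R -> R -> R) (x y : R) : R :=
  / gamma * beta x y * x.

Definition C1_on_S (beta bx by_ : R -> R -> R) : Prop :=
  forall x y, inS x y ->
    is_derive (fun u => beta u y) x (bx x y) /\
    is_derive (fun v => beta x v) y (by_ x y) /\
    continuous (fun p : R * R => bx (fst p) (snd p)) (x, y) /\
    continuous (fun p : R * R => by_ (fst p) (snd p)) (x, y).

Definition is_BFSIR_solution (gamma : R) (beta : R -> R -> R)
    (x0 y0 : R) (x y : R -> R) : Prop :=
  x 0 = x0 /\ y 0 = y0 /\
  (forall t, 0 <= t -> inS (x t) (y t)) /\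
  filterlim x (at_right 0) (locally x0) /\
  filterlim y (at_right 0) (locally y0) /\
  (forall t, 0 < t ->
     is_derive x t (- gamma * Rnum gamma beta (x t) (y t) * y t) /\
     is_derive y t (gamma * (Rnum gamma beta (x t) (y t) - 1) * y t)).

From Stdlib Require Import Reals Lra Psatz Classical.
From Coquelicot Require Import Coquelicot.
Open Scope R_scope.

(* Along the trajectory [y' = gamma (R - 1) y], and [y] stays positive because
   [(y e^(gamma t))' = gamma R y e^(gamma t) >= 0]; so everything hinges on the sign
   of [R(t) - 1].  At a time where [R = 1] we have [y' = 0] and [x' = - gamma y < 0],
   so [gamma R = beta x] moves at rate [(beta + x beta_x) x' < 0]: every crossing of
   the level [R = 1] is downward.  Hence once [R <= 1], [R < 1] forever after.  And
   [R > 1] cannot persist: [y] would stay above [y0], so [x' <= - gamma y0] would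
   drive [x] out of [S].  Since only the partial derivatives of [beta] are given,
   the rate at a crossing is estimated with mean values along a path inside [S]. *)

Notation nonneg_nbhs c := (within (fun s : R => 0 <= s) (locally c)).

Definition continuous_nonneg (f : R -> R) (c : R) : Prop :=
  filterlim f (nonneg_nbhs c) (locally (f c)).

Lemma nonneg_nbhsP (c : R) (P : R -> Prop) :
  nonneg_nbhs c P <->
  exists d, 0 < d /\ forall s, 0 <= s -> Rabs (s - c) < d -> P s.
Proof.
  split.
  - intros [d Hd]. exists d; split; [apply cond_pos|].
    intros s Hs Hsc. exact (Hd s Hsc Hs).
  - intros [d [Hd HP]]. exists (mkposreal d Hd). intros s Hsc Hs. exact (HP s Hs Hsc).
Qed.

Lemma continuous_nonneg_eps (f : R -> R) (c eps : R) :
  continuous_nonneg f c -> 0 < eps ->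
  nonneg_nbhs c (fun s => Rabs (f s - f c) < eps).
Proof.
  intros Hf Heps. exact (proj1 (filterlim_locally _ _) Hf (mkposreal eps Heps)).
Qed.

Lemma continuous_nonneg_ball (f : R -> R) (c eps : R) :
  continuous_nonneg f c -> 0 < eps ->
  exists d, 0 < d /\ forall s, 0 <= s -> Rabs (s - c) < d -> Rabs (f s - f c) < eps.
Proof.
  intros Hf Heps. exact (proj1 (nonneg_nbhsP _ _) (continuous_nonneg_eps f c eps Hf Heps)).
Qed.

Lemma continuous_nonneg_const (k c : R) : continuous_nonneg (fun _ => k) c.
Proof. apply filterlim_const. Qed.

Lemma continuous_nonneg_plus (f g : R -> R) (c : R) :
  continuous_nonneg f c -> continuous_nonneg g c ->
  continuous_nonneg (fun t => f t + g t) c.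
Proof.
  intros Hf Hg. eapply filterlim_comp_2; [exact Hf | exact Hg |].
  exact (filterlim_plus (V := R_NormedModule) (f c) (g c)).
Qed.

Lemma continuous_nonneg_mult (f g : R -> R) (c : R) :
  continuous_nonneg f c -> continuous_nonneg g c ->
  continuous_nonneg (fun t => f t * g t) c.
Proof.
  intros Hf Hg. eapply filterlim_comp_2; [exact Hf | exact Hg |].
  exact (filterlim_mult (K := R_AbsRing) (f c) (g c)).
Qed.

Lemma continuous_nonneg_of_derive (f : R -> R) (c l : R) :
  is_derive f c l -> continuous_nonneg f c.
Proof.
  intros Hd. apply (filterlim_filter_le_1 _ (filter_le_within (F := locally c) _)).
  apply (ex_derive_continuous (K := R_AbsRing) (V := R_NormedModule)). now exists l.
Qed.

Lemma continuous_nonneg_at_0 (f : R -> R) :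
  filterlim f (at_right 0) (locally (f 0)) -> continuous_nonneg f 0.
Proof.
  intros Hf P HP. destruct (Hf P HP) as [d Hd]. exists d. intros s Hsd [Hs | <-].
  - exact (Hd s Hsd Hs).
  - exact (locally_singleton _ _ HP).
Qed.

Lemma continuous_nonneg_solution (f df : R -> R) :
  filterlim f (at_right 0) (locally (f 0)) ->
  (forall c, 0 < c -> is_derive f c (df c)) ->
  forall c, 0 <= c -> continuous_nonneg f c.
Proof.
  intros H0 Hd c [Hc | <-].
  - exact (continuous_nonneg_of_derive f c (df c) (Hd c Hc)).
  - exact (continuous_nonneg_at_0 f H0).
Qed.

Lemma continuity_pt_clamp (f : R -> R) (c : R) :
  0 <= c -> continuous_nonneg f c -> continuity_pt (fun t => f (Rmax 0 t)) c.
Proof.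
  intros Hc Hf. apply continuity_pt_filterlim. rewrite (Rmax_right 0 c Hc).
  apply (filterlim_comp _ _ _ (Rmax 0) f _ (nonneg_nbhs c)); [| exact Hf].
  intros P [d Hd]. exists d. intros s Hs. apply Hd; [| apply Rmax_l].
  change (Rabs (Rmax 0 s - c) < d). change (Rabs (s - c) < d) in Hs.
  unfold Rmax; destruct Rle_dec; [exact Hs|].
  apply Rabs_def2 in Hs. apply Rabs_def1; lra.
Qed.

(* Stdlib's [MVT] gives a strictly interior point; clamping at 0 turns
   one-sided continuity at [s = 0] into the two-sided continuity it needs. *)
Lemma MVT_nonneg (F dF : R -> R) (s t : R) :
  (forall c, 0 < c -> is_derive F c (dF c)) ->
  (forall c, 0 <= c -> continuous_nonneg F c) ->
  0 <= s -> s < t ->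
  exists c, s < c < t /\ F t - F s = dF c * (t - s).
Proof.
  intros Hd Hc Hs Hst. set (G t := F (Rmax 0 t)).
  assert (HdG : forall c, s < c < t -> is_derive G c (dF c)).
  { intros c Hcs. apply is_derive_ext_loc with F; [| apply Hd; lra].
    exists (mkposreal c ltac:(lra)). intros z Hz.
    change (Rabs (z - c) < c) in Hz. apply Rabs_def2 in Hz.
    unfold G. rewrite Rmax_right; lra. }
  assert (pr : forall c, s < c < t -> derivable_pt G c).
  { intros c Hcs. exists (dF c). apply is_derive_Reals, HdG, Hcs. }
  destruct (MVT G id s t pr (fun c _ => derivable_pt_id c) Hst
    (fun c Hcs => continuity_pt_clamp F c ltac:(lra) (Hc c ltac:(lra)))
    (fun c _ => derivable_continuous_pt _ _ (derivable_pt_id c))) as [c [Hcs E]].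
  exists c; split; [exact Hcs|].
  rewrite (derive_pt_eq_0 G c (dF c) (pr c Hcs)) in E
    by now apply is_derive_Reals, HdG.
  rewrite derive_pt_id in E. unfold G, id in E.
  rewrite (Rmax_right 0 t), (Rmax_right 0 s) in E by lra. lra.
Qed.

Lemma MVT_nonneg_between (F dF : R -> R) (u s : R) :
  (forall c, 0 < c -> is_derive F c (dF c)) ->
  (forall c, 0 <= c -> continuous_nonneg F c) ->
  0 <= u -> 0 <= s -> s <> u ->
  exists c, 0 <= c /\ Rabs (c - u) < Rabs (s - u) /\ F s - F u = dF c * (s - u).
Proof.
  intros Hd Hc Hu Hs Hne. destruct (Rlt_le_dec s u) as [Hlt | Hle].
  - destruct (MVT_nonneg F dF s u Hd Hc Hs Hlt) as [c [Hcs E]].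
    exists c. split; [lra|]. split; [rewrite !Rabs_left; lra | lra].
  - destruct (MVT_nonneg F dF u s Hd Hc Hu ltac:(lra)) as [c [Hcs E]].
    exists c. split; [lra|]. split; [rewrite !Rabs_right; lra | lra].
Qed.

(* [z] is the supremum of [{s in [a, b] | f s <= 0}]. *)
Lemma last_zero (f : R -> R) (a b : R) :
  0 <= a -> a < b -> f a <= 0 -> 0 < f b ->
  (forall c, a <= c <= b -> continuous_nonneg f c) ->
  exists z, a <= z < b /\ f z = 0 /\ forall s, z < s <= b -> 0 < f s.
Proof.
  intros Ha Hab Hfa Hfb Hc.
  set (E s := a <= s <= b /\ f s <= 0).
  destruct (completeness E) as [z [Hub Hlub]].
  { exists b. intros s Hs. apply Hs. }
  { exists a. split; [lra | exact Hfa]. }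
  assert (Haz : a <= z) by (apply Hub; split; [lra | exact Hfa]).
  assert (Hzb : z <= b) by (apply Hlub; intros s Hs; apply Hs).
  assert (Hright : forall s, z < s <= b -> 0 < f s).
  { intros s Hs. destruct (Rlt_le_dec 0 (f s)) as [Hpos | Hneg]; [exact Hpos|].
    assert (s <= z) by (apply Hub; split; [lra | exact Hneg]). lra. }
  assert (Hfz_le : f z <= 0).
  { destruct (Rle_lt_dec (f z) 0) as [Hle | Hgt]; [exact Hle | exfalso].
    destruct (continuous_nonneg_ball f z (f z) (Hc z ltac:(lra)) Hgt) as [d [Hd Hnear]].
    assert (z <= z - d / 2); [|lra].
    apply Hlub. intros s [Hs Hfs].
    destruct (Rle_lt_dec s (z - d)) as [Hle | Hlt]; [lra | exfalso].
    assert (Hsz : s <= z) by (apply Hub; split; assumption).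
    assert (Rabs (s - z) < d) by (apply Rabs_def1; lra).
    specialize (Hnear s ltac:(lra) H). apply Rabs_def2 in Hnear. lra. }
  assert (Hzb' : z < b) by (destruct Hzb as [Hlt | ->]; lra).
  exists z. split; [lra|]. split; [| exact Hright].
  destruct Hfz_le as [Hlt | Heq]; [exfalso | exact Heq].
  destruct (continuous_nonneg_ball f z (- f z) (Hc z ltac:(lra)) ltac:(lra)) as [d [Hd Hnear]].
  set (s := Rmin (z + d / 2) b).
  assert (Hs : z < s <= b /\ Rabs (s - z) < d).
  { unfold s, Rmin; destruct Rle_dec; split; try lra; apply Rabs_def1; lra. }
  specialize (Hnear s ltac:(lra) (proj2 Hs)). apply Rabs_def2 in Hnear.
  specialize (Hright s (proj1 Hs)). lra.
Qed.

Definition downcrossing (f : R -> R) (u : R) : Prop :=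
  nonneg_nbhs u (fun s => s <> u -> f s * (s - u) < 0).

(* A continuous function all of whose zeros are downcrossings cannot return
   to [0] once it is nonpositive: a last zero before a positive value would
   be an upcrossing. *)
Lemma stays_negative (f : R -> R) :
  (forall c, 0 <= c -> continuous_nonneg f c) ->
  (forall u, 0 <= u -> f u = 0 -> downcrossing f u) ->
  forall t0 t, 0 <= t0 -> t0 < t -> f t0 <= 0 -> f t < 0.
Proof.
  intros Hc Hdown t0 t Ht0 Ht Hf0.
  assert (Hnot_pos : forall s, t0 < s -> ~ 0 < f s).
  { intros s Hs Hfs.
    destruct (last_zero f t0 s Ht0 Hs Hf0 Hfs (fun c Hc' => Hc c ltac:(lra)))
      as [z [Hz [Hfz Hright]]].
    destruct (proj1 (nonneg_nbhsP _ _) (Hdown z ltac:(lra) Hfz)) as [d [Hd Hnear]].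
    set (r := Rmin (z + d / 2) s).
    assert (Hr : z < r <= s /\ Rabs (r - z) < d).
    { unfold r, Rmin; destruct Rle_dec; split; try lra; apply Rabs_def1; lra. }
    specialize (Hnear r ltac:(lra) (proj2 Hr) ltac:(lra)).
    specialize (Hright r (proj1 Hr)). nra. }
  destruct (Rtotal_order (f t) 0) as [Hlt | [Heq | Hgt]];
    [exact Hlt | exfalso | exact (False_ind _ (Hnot_pos t Ht Hgt))].
  destruct (proj1 (nonneg_nbhsP _ _) (Hdown t ltac:(lra) Heq)) as [d [Hd Hnear]].
  set (r := Rmax (t - d / 2) ((t0 + t) / 2)).
  assert (Hr : t0 < r < t /\ Rabs (r - t) < d).
  { unfold r, Rmax; destruct Rle_dec; split; try lra; apply Rabs_def1; lra. }
  specialize (Hnear r ltac:(lra) (proj2 Hr) ltac:(lra)).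
  apply (Hnot_pos r ltac:(lra)). nra.
Qed.

Lemma continuous2_ball (g : R -> R -> R) (a b eps : R) :
  continuous (fun p : R * R => g (fst p) (snd p)) (a, b) -> 0 < eps ->
  exists d, 0 < d /\ forall p q,
    Rabs (p - a) < d -> Rabs (q - b) < d -> Rabs (g p q - g a b) < eps.
Proof.
  intros Hg Heps.
  destruct (proj1 (filterlim_locally _ _) Hg (mkposreal eps Heps)) as [d Hd].
  exists d; split; [apply cond_pos|]. intros p q Hp Hq. exact (Hd (p, q) (conj Hp Hq)).
Qed.

Lemma continuous2_local_bound (g : R -> R -> R) (a b : R) :
  continuous (fun p : R * R => g (fst p) (snd p)) (a, b) ->
  exists d, 0 < d /\ forall p q,
    Rabs (p - a) < d -> Rabs (q - b) < d -> Rabs (g p q) <= Rabs (g a b) + 1.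
Proof.
  intros Hg. destruct (continuous2_ball g a b 1 Hg ltac:(lra)) as [d [Hd Hnear]].
  exists d. split; [exact Hd|]. intros p q Hp Hq.
  replace (g p q) with (g a b + (g p q - g a b)) by ring.
  eapply Rle_trans; [apply Rabs_triang|]. specialize (Hnear p q Hp Hq). lra.
Qed.

Lemma Rabs_between (a p w : R) :
  Rmin a p <= w <= Rmax a p -> Rabs (w - a) <= Rabs (p - a).
Proof.
  unfold Rmin, Rmax; destruct Rle_dec; intros [H1 H2];
  unfold Rabs; repeat destruct Rcase_abs; lra.
Qed.

Lemma inS_between_x (a p v w : R) :
  inS a v -> inS p v -> Rmin a p <= w <= Rmax a p -> inS w v.
Proof. unfold inS, Rmin, Rmax; destruct Rle_dec; lra. Qed.

Lemma inS_between_y (u a p w : R) :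
  inS u a -> inS u p -> Rmin a p <= w <= Rmax a p -> inS u w.
Proof. unfold inS, Rmin, Rmax; destruct Rle_dec; lra. Qed.

Section C1_on_S.
Variables (beta bx by_ : R -> R -> R).
Hypothesis HC1 : C1_on_S beta bx by_.

Lemma C1_on_S_MVT_x (a p v : R) : inS a v -> inS p v ->
  exists xi, Rabs (xi - a) <= Rabs (p - a) /\
    beta p v - beta a v = bx xi v * (p - a).
Proof.
  intros Ha Hp.
  destruct (MVT_gen (fun w => beta w v) a p (fun w => bx w v)) as [xi [Hxi E]].
  - intros w Hw. apply (HC1 w v). apply (inS_between_x a p); auto; lra.
  - intros w Hw. apply continuity_pt_filterlim.
    apply (ex_derive_continuous (K := R_AbsRing) (V := R_NormedModule) (fun z => beta z v)).
    exists (bx w v). apply (HC1 w v). apply (inS_between_x a p); auto.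
  - exists xi. split; [apply Rabs_between; auto | exact E].
Qed.

Lemma C1_on_S_MVT_y (u a p : R) : inS u a -> inS u p ->
  exists eta, Rabs (eta - a) <= Rabs (p - a) /\
    beta u p - beta u a = by_ u eta * (p - a).
Proof.
  intros Ha Hp.
  destruct (MVT_gen (fun w => beta u w) a p (fun w => by_ u w)) as [eta [Heta E]].
  - intros w Hw. apply (HC1 u w). apply (inS_between_y u a p); auto; lra.
  - intros w Hw. apply continuity_pt_filterlim.
    apply (ex_derive_continuous (K := R_AbsRing) (V := R_NormedModule) (fun z => beta u z)).
    exists (by_ u w). apply (HC1 u w). apply (inS_between_y u a p); auto.
  - exists eta. split; [apply Rabs_between; auto | exact E].
Qed.

(* Go from [(a, b)] to [(p, q)] along two sides of a rectangle, through the corner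
   [(p, b)] if [p <= a] and [(a, q)] otherwise: that corner lies in [S]. *)
Lemma C1_on_S_increment (a b p q : R) : inS a b -> inS p q ->
  exists x1 y1 x2 y2,
    Rabs (x1 - a) <= Rabs (p - a) /\ Rabs (y1 - b) <= Rabs (q - b) /\
    Rabs (x2 - a) <= Rabs (p - a) /\ Rabs (y2 - b) <= Rabs (q - b) /\
    beta p q - beta a b = bx x1 y1 * (p - a) + by_ x2 y2 * (q - b).
Proof.
  intros Hab Hpq.
  assert (Hzero : forall c d, Rabs (c - c) <= Rabs d)
    by (intros; rewrite Rminus_diag, Rabs_R0; apply Rabs_pos).
  destruct (Rle_dec p a) as [Hpa | Hpa].
  - assert (Hpb : inS p b) by (unfold inS in *; lra).
    destruct (C1_on_S_MVT_x a p b Hab Hpb) as [xi [Hxi E1]].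
    destruct (C1_on_S_MVT_y p b q Hpb Hpq) as [eta [Heta E2]].
    exists xi, b, p, eta. repeat split; auto using Rle_refl; lra.
  - assert (Haq : inS a q) by (unfold inS in *; lra).
    destruct (C1_on_S_MVT_x a p q Haq Hpq) as [xi [Hxi E1]].
    destruct (C1_on_S_MVT_y a b q Hab Haq) as [eta [Heta E2]].
    exists xi, q, a, eta. repeat split; auto using Rle_refl; lra.
Qed.

Lemma C1_on_S_continuous_along {T : Type} {F : (T -> Prop) -> Prop}
  {FF : Filter F} (f g : T -> R) (a b : R) :
  inS a b -> F (fun t => inS (f t) (g t)) ->
  filterlim f F (locally a) -> filterlim g F (locally b) ->
  filterlim (fun t => beta (f t) (g t)) F (locally (beta a b)).
Proof.
  intros Hab HS Hf Hg. apply filterlim_locally. intros eps.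
  destruct (HC1 a b Hab) as [_ [_ [Cx Cy]]].
  destruct (continuous2_local_bound bx a b Cx) as [d1 [Hd1 Hbx]].
  destruct (continuous2_local_bound by_ a b Cy) as [d2 [Hd2 Hby]].
  set (K := Rabs (bx a b) + Rabs (by_ a b) + 2).
  assert (HK : 0 < K) by (unfold K; pose proof (Rabs_pos (bx a b));
                          pose proof (Rabs_pos (by_ a b)); lra).
  set (d := Rmin (Rmin d1 d2) (eps / (3 * K))).
  assert (Hd : 0 < d).
  { unfold d; repeat apply Rmin_glb_lt; auto. apply Rdiv_lt_0_compat; [apply cond_pos | lra]. }
  assert (Hdd : d <= d1 /\ d <= d2 /\ d <= eps / (3 * K)).
  { unfold d. pose proof (Rmin_l (Rmin d1 d2) (eps / (3 * K))).
    pose proof (Rmin_r (Rmin d1 d2) (eps / (3 * K))).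
    pose proof (Rmin_l d1 d2). pose proof (Rmin_r d1 d2). lra. }
  pose proof (proj1 (filterlim_locally _ _) Hf (mkposreal d Hd)) as Nf.
  pose proof (proj1 (filterlim_locally _ _) Hg (mkposreal d Hd)) as Ng.
  generalize (filter_and _ _ HS (filter_and _ _ Nf Ng)).
  apply filter_imp. intros t [Ht [Hp Hq]].
  change (Rabs (f t - a) < d) in Hp. change (Rabs (g t - b) < d) in Hq.
  change (Rabs (beta (f t) (g t) - beta a b) < eps).
  destruct (C1_on_S_increment a b (f t) (g t) Hab Ht)
    as [x1 [y1 [x2 [y2 [A1 [A2 [A3 [A4 E]]]]]]]].
  specialize (Hbx x1 y1 ltac:(lra) ltac:(lra)).
  specialize (Hby x2 y2 ltac:(lra) ltac:(lra)).
  assert (B1 : Rabs (bx x1 y1) <= K) by (unfold K; pose proof (Rabs_pos (by_ a b)); lra).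
  assert (B2 : Rabs (by_ x2 y2) <= K) by (unfold K; pose proof (Rabs_pos (bx a b)); lra).
  rewrite E. eapply Rle_lt_trans; [apply Rabs_triang|]. rewrite !Rabs_mult.
  assert (Rabs (bx x1 y1) * Rabs (f t - a) <= K * d)
    by (apply Rmult_le_compat; try apply Rabs_pos; lra).
  assert (Rabs (by_ x2 y2) * Rabs (g t - b) <= K * d)
    by (apply Rmult_le_compat; try apply Rabs_pos; lra).
  assert (K * d <= eps / 3).
  { apply Rle_trans with (K * (eps / (3 * K))); [apply Rmult_le_compat_l; lra|].
    right. field. lra. }
  pose proof (cond_pos eps). lra.
Qed.

End C1_on_S.

(* The rate of [gamma R] at a crossing, [x' (beta + x beta_x)] with [x' ~ - gamma y],
   perturbed by the cross term [x beta_y y'] where [y' ~ 0]. *)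
Lemma perturbed_rate_neg (g b A a B dxc K byc dyc : R) :
  0 < g -> 0 < b -> 0 < A -> 0 < a -> 0 < B ->
  dxc < - (g * b / 2) -> A / 2 < K -> Rabs byc <= B ->
  Rabs dyc < g * b * A / (8 * a * B) ->
  dxc * K + a * byc * dyc < 0.
Proof.
  intros Hg Hb HA Ha HB Hdx HK Hby Hdy.
  assert (Hgb : 0 < g * b) by (apply Rmult_lt_0_compat; lra).
  assert (0 < (- (g * b / 2) - dxc) * K) by (apply Rmult_lt_0_compat; lra).
  assert (0 < g * b * (K - A / 2)) by (apply Rmult_lt_0_compat; lra).
  assert (Hsecond : Rabs (a * byc * dyc) <= g * b * A / 8).
  { rewrite !Rabs_mult, (Rabs_right a) by lra.
    apply Rle_trans with (a * B * (g * b * A / (8 * a * B))).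
    - apply Rmult_le_compat;
        [apply Rmult_le_pos; [lra | apply Rabs_pos] | apply Rabs_pos
        | apply Rmult_le_compat_l; lra | lra].
    - right. field. lra. }
  pose proof (Rle_abs (a * byc * dyc)).
  assert (0 < g * b * A) by (apply Rmult_lt_0_compat; lra).
  nra.
Qed.

Section BFSIR_trajectory.
Variables (gamma : R) (beta bx by_ : R -> R -> R) (x0 y0 : R) (x y : R -> R).
Hypothesis Hgamma : 0 < gamma.
Hypothesis Hbeta : forall a b, inS a b -> 0 < beta a b.
Hypothesis HC1 : C1_on_S beta bx by_.
Hypothesis Hmono : forall a b, inS a b -> a * bx a b + beta a b > 0.
Hypothesis Hy0 : 0 < y0.
Hypothesis Hsol : is_BFSIR_solution gamma beta x0 y0 x y.

Definition repro (t : R) : R := Rnum gamma beta (x t) (y t).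
Definition dx (t : R) : R := - gamma * repro t * y t.
Definition dy (t : R) : R := gamma * (repro t - 1) * y t.

Lemma x_at_0 : x 0 = x0. Proof. apply Hsol. Qed.
Lemma y_at_0 : y 0 = y0. Proof. apply Hsol. Qed.
Lemma traj_inS t : 0 <= t -> inS (x t) (y t). Proof. apply Hsol. Qed.
Lemma x_derive t : 0 < t -> is_derive x t (dx t). Proof. apply Hsol. Qed.
Lemma y_derive t : 0 < t -> is_derive y t (dy t). Proof. apply Hsol. Qed.

Lemma x_continuous c : 0 <= c -> continuous_nonneg x c.
Proof.
  apply (continuous_nonneg_solution x dx); [| exact x_derive].
  rewrite x_at_0. apply Hsol.
Qed.

Lemma y_continuous c : 0 <= c -> continuous_nonneg y c.
Proof.
  apply (continuous_nonneg_solution y dy); [| exact y_derive].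
  rewrite y_at_0. apply Hsol.
Qed.

Lemma beta_traj_continuous c : 0 <= c ->
  continuous_nonneg (fun t => beta (x t) (y t)) c.
Proof.
  intros Hc. apply (C1_on_S_continuous_along beta bx by_ HC1 x y);
    [exact (traj_inS c Hc) | | exact (x_continuous c Hc) | exact (y_continuous c Hc)].
  exact (filter_forall (F := locally c) _ traj_inS).
Qed.

Lemma repro_continuous c : 0 <= c -> continuous_nonneg repro c.
Proof.
  intros Hc. unfold repro, Rnum.
  apply continuous_nonneg_mult; [| exact (x_continuous c Hc)].
  apply continuous_nonneg_mult; [apply continuous_nonneg_const|].
  exact (beta_traj_continuous c Hc).
Qed.

Lemma repro_minus_1_continuous c : 0 <= c ->
  continuous_nonneg (fun t => repro t - 1) c.
Proof.
  intros Hc. apply continuous_nonneg_plus;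
    [exact (repro_continuous c Hc) | apply continuous_nonneg_const].
Qed.

Lemma dx_continuous c : 0 <= c -> continuous_nonneg dx c.
Proof.
  intros Hc. unfold dx. apply continuous_nonneg_mult; [| exact (y_continuous c Hc)].
  apply continuous_nonneg_mult; [apply continuous_nonneg_const | exact (repro_continuous c Hc)].
Qed.

Lemma dy_continuous c : 0 <= c -> continuous_nonneg dy c.
Proof.
  intros Hc. unfold dy. apply continuous_nonneg_mult; [| exact (y_continuous c Hc)].
  apply continuous_nonneg_mult;
    [apply continuous_nonneg_const | exact (repro_minus_1_continuous c Hc)].
Qed.

Lemma repro_nonneg t : 0 <= t -> 0 <= repro t.
Proof.
  intros Ht. pose proof (traj_inS t Ht) as HS. pose proof (Hbeta _ _ HS).
  unfold repro, Rnum, inS in *. pose proof (Rinv_0_lt_compat gamma Hgamma).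
  apply Rmult_le_pos; [apply Rmult_le_pos |]; lra.
Qed.

Lemma y_pos t : 0 <= t -> 0 < y t.
Proof.
  intros Ht.
  set (G s := y s * exp (gamma * s)).
  set (dG s := gamma * repro s * y s * exp (gamma * s)).
  assert (Hexp : forall c, is_derive (fun s => exp (gamma * s)) c (gamma * exp (gamma * c)))
    by (intros c; auto_derive; [exact I | ring]).
  assert (HdG : forall c, 0 < c -> is_derive G c (dG c)).
  { intros c Hc. eapply is_derive_ext; [intros s; reflexivity|].
    replace (dG c) with (dy c * exp (gamma * c) + y c * (gamma * exp (gamma * c)))
      by (unfold dG, dy; ring).
    exact (is_derive_mult y _ c _ _ (y_derive c Hc) (Hexp c) Rmult_comm). }
  assert (HcG : forall c, 0 <= c -> continuous_nonneg G c).
  { intros c Hc. apply continuous_nonneg_mult; [exact (y_continuous c Hc)|].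
    exact (continuous_nonneg_of_derive _ c _ (Hexp c)). }
  destruct Ht as [Ht | <-]; [| rewrite y_at_0; exact Hy0].
  destruct (MVT_nonneg G dG 0 t HdG HcG ltac:(lra) Ht) as [c [Hc E]].
  assert (0 <= dG c).
  { pose proof (repro_nonneg c ltac:(lra)). pose proof (traj_inS c ltac:(lra)) as HS.
    pose proof (exp_pos (gamma * c)). unfold dG, inS in *.
    apply Rmult_le_pos; [apply Rmult_le_pos; [apply Rmult_le_pos |] |]; lra. }
  unfold G in E. rewrite y_at_0, Rmult_0_r, exp_0 in E.
  pose proof (exp_pos (gamma * t)). nra.
Qed.

(* Mean value form of the increment of [R] along the trajectory:
   [beta p q p - beta a b a = (p - a)(beta p q + a bx) + a by (q - b)]
   combined with the mean value theorem in time for [x] and [y]. *)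
Lemma repro_increment u s : 0 <= u -> 0 <= s -> s <> u ->
  exists c1 c2 x1 y1 x2 y2,
    0 <= c1 /\ Rabs (c1 - u) < Rabs (s - u) /\
    0 <= c2 /\ Rabs (c2 - u) < Rabs (s - u) /\
    Rabs (x1 - x u) <= Rabs (x s - x u) /\ Rabs (y1 - y u) <= Rabs (y s - y u) /\
    Rabs (x2 - x u) <= Rabs (x s - x u) /\ Rabs (y2 - y u) <= Rabs (y s - y u) /\
    gamma * (repro s - repro u) =
      (s - u) * (dx c1 * (beta (x s) (y s) + x u * bx x1 y1) + x u * by_ x2 y2 * dy c2).
Proof.
  intros Hu Hs Hne.
  destruct (C1_on_S_increment beta bx by_ HC1 (x u) (y u) (x s) (y s)
              (traj_inS u Hu) (traj_inS s Hs))
    as [x1 [y1 [x2 [y2 [A1 [A2 [A3 [A4 Ebeta]]]]]]]].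
  destruct (MVT_nonneg_between x dx u s x_derive x_continuous Hu Hs Hne)
    as [c1 [Hc1 [Hc1u Ex]]].
  destruct (MVT_nonneg_between y dy u s y_derive y_continuous Hu Hs Hne)
    as [c2 [Hc2 [Hc2u Ey]]].
  exists c1, c2, x1, y1, x2, y2. repeat split; try assumption.
  assert (Hrepro : forall t, gamma * repro t = beta (x t) (y t) * x t)
    by (intros t; unfold repro, Rnum; field; lra).
  rewrite Rmult_minus_distr_l, !Hrepro.
  replace (beta (x s) (y s) * x s - beta (x u) (y u) * x u)
    with ((x s - x u) * beta (x s) (y s) + x u * (beta (x s) (y s) - beta (x u) (y u)))
    by ring.
  rewrite Ebeta, Ex, Ey. ring.
Qed.

Lemma repro_increment_factor_neg u : 0 <= u -> repro u = 1 ->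
  nonneg_nbhs u (fun s => forall c1 c2 x1 y1 x2 y2,
    0 <= c1 -> Rabs (c1 - u) < Rabs (s - u) ->
    0 <= c2 -> Rabs (c2 - u) < Rabs (s - u) ->
    Rabs (x1 - x u) <= Rabs (x s - x u) -> Rabs (y1 - y u) <= Rabs (y s - y u) ->
    Rabs (x2 - x u) <= Rabs (x s - x u) -> Rabs (y2 - y u) <= Rabs (y s - y u) ->
    dx c1 * (beta (x s) (y s) + x u * bx x1 y1) + x u * by_ x2 y2 * dy c2 < 0).
Proof.
  intros Hu Hone.
  set (a := x u). set (b := y u).
  assert (Hab : inS a b) by exact (traj_inS u Hu).
  assert (Hb : 0 < b) by exact (y_pos u Hu).
  assert (Ha : 0 < a).
  { destruct Hab as [[Ha | Ha] _]; [exact Ha|].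
    unfold repro, Rnum in Hone. fold a b in Hone. rewrite <- Ha, Rmult_0_r in Hone. lra. }
  set (A := a * bx a b + beta a b).
  assert (HA : 0 < A) by exact (Hmono a b Hab).
  set (B := Rabs (by_ a b) + 1).
  assert (HB : 0 < B) by (unfold B; pose proof (Rabs_pos (by_ a b)); lra).
  set (eta := gamma * b * A / (8 * a * B)).
  assert (Heta : 0 < eta).
  { unfold eta. apply Rdiv_lt_0_compat; [| nra]. repeat apply Rmult_lt_0_compat; lra. }
  destruct (HC1 a b Hab) as [_ [_ [Cx Cy]]].
  destruct (continuous2_ball bx a b (A / (4 * a)) Cx ltac:(apply Rdiv_lt_0_compat; lra))
    as [dbx [Hdbx Hbx]].
  destruct (continuous2_local_bound by_ a b Cy) as [dby [Hdby Hby]].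
  set (rho := Rmin dbx dby).
  assert (Hrho : 0 < rho) by (apply Rmin_glb_lt; assumption).
  assert (Hrho' : rho <= dbx /\ rho <= dby) by (split; [apply Rmin_l | apply Rmin_r]).
  assert (Hnear : nonneg_nbhs u (fun s =>
    Rabs (x s - a) < rho /\ Rabs (y s - b) < rho /\
    Rabs (beta (x s) (y s) - beta a b) < A / 4 /\
    Rabs (dx s - dx u) < gamma * b / 2 /\ Rabs (dy s - dy u) < eta)).
  { repeat apply filter_and.
    - exact (continuous_nonneg_eps x u rho (x_continuous u Hu) Hrho).
    - exact (continuous_nonneg_eps y u rho (y_continuous u Hu) Hrho).
    - exact (continuous_nonneg_eps _ u (A / 4) (beta_traj_continuous u Hu) ltac:(lra)).
    - exact (continuous_nonneg_eps dx u (gamma * b / 2) (dx_continuous u Hu) ltac:(nra)).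
    - exact (continuous_nonneg_eps dy u eta (dy_continuous u Hu) Heta). }
  destruct (proj1 (nonneg_nbhsP _ _) Hnear) as [d [Hd Hclose]].
  apply nonneg_nbhsP. exists d. split; [exact Hd|].
  intros s Hs Hsd c1 c2 x1 y1 x2 y2 Hc1 Hc1u Hc2 Hc2u A1 A2 A3 A4.
  fold a b in A1, A2, A3, A4 |- *.
  destruct (Hclose s Hs Hsd) as [Hxs [Hys [Hbeta_s _]]].
  destruct (Hclose c1 Hc1 ltac:(lra)) as [_ [_ [_ [Hdx_c1 _]]]].
  destruct (Hclose c2 Hc2 ltac:(lra)) as [_ [_ [_ [_ Hdy_c2]]]].
  replace (dx u) with (- (gamma * b)) in Hdx_c1 by (unfold dx; rewrite Hone; fold b; ring).
  replace (dy u) with 0 in Hdy_c2 by (unfold dy; rewrite Hone; ring).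
  rewrite Rminus_0_r in Hdy_c2. apply Rabs_def2 in Hdx_c1.
  apply (perturbed_rate_neg gamma b A a B); try lra.
  - specialize (Hbx x1 y1 ltac:(lra) ltac:(lra)).
    apply Rabs_def2 in Hbx. apply Rabs_def2 in Hbeta_s.
    assert (a * (A / (4 * a)) = A / 4) by (field; lra).
    unfold A in *. nra.
  - exact (Hby x2 y2 ltac:(lra) ltac:(lra)).
  - exact Hdy_c2.
Qed.

Lemma repro_downcrossing u : 0 <= u -> repro u = 1 ->
  downcrossing (fun t => repro t - 1) u.
Proof.
  intros Hu Hone.
  destruct (proj1 (nonneg_nbhsP _ _) (repro_increment_factor_neg u Hu Hone))
    as [d [Hd Hfactor]].
  apply nonneg_nbhsP. exists d. split; [exact Hd|]. intros s Hs Hsd Hne.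
  destruct (repro_increment u s Hu Hs Hne)
    as [c1 [c2 [x1 [y1 [x2 [y2 [Hc1 [Hc1u [Hc2 [Hc2u [A1 [A2 [A3 [A4 E]]]]]]]]]]]]]].
  pose proof (Hfactor s Hs Hsd c1 c2 x1 y1 x2 y2 Hc1 Hc1u Hc2 Hc2u A1 A2 A3 A4) as Hneg.
  rewrite Hone in E.
  assert (Hsq : 0 < (s - u) * (s - u)) by (assert (s - u <> 0) by lra; nra).
  assert (gamma * ((repro s - 1) * (s - u)) < 0).
  { replace (gamma * ((repro s - 1) * (s - u))) with ((s - u) * (gamma * (repro s - 1)))
      by ring.
    rewrite E, <- Rmult_assoc. nra. }
  nra.
Qed.

Lemma repro_stays_below u t : 0 <= u -> u < t -> repro u <= 1 -> repro t < 1.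
Proof.
  intros Hu Hut Hle.
  enough (repro t - 1 < 0) by lra.
  apply (stays_negative (fun t => repro t - 1) repro_minus_1_continuous) with u;
    [| assumption | assumption | lra].
  intros v Hv Hzero. apply repro_downcrossing; [exact Hv | lra].
Qed.

Lemma y_decreasing s t : 0 <= s -> s < t ->
  (forall c, s < c < t -> repro c < 1) -> y t < y s.
Proof.
  intros Hs Hst Hbelow.
  destruct (MVT_nonneg y dy s t y_derive y_continuous Hs Hst) as [c [Hc E]].
  pose proof (y_pos c ltac:(lra)). pose proof (Hbelow c Hc).
  assert (0 < gamma * (1 - repro c) * y c * (t - s))
    by (repeat apply Rmult_lt_0_compat; lra).
  unfold dy in E. lra.
Qed.

Lemma y_increasing s t : 0 <= s -> s < t ->
  (forall c, s < c < t -> 1 < repro c) -> y s < y t.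
Proof.
  intros Hs Hst Habove.
  destruct (MVT_nonneg y dy s t y_derive y_continuous Hs Hst) as [c [Hc E]].
  pose proof (y_pos c ltac:(lra)). pose proof (Habove c Hc).
  assert (0 < gamma * (repro c - 1) * y c * (t - s))
    by (repeat apply Rmult_lt_0_compat; lra).
  unfold dy in E. lra.
Qed.

Lemma repro_eventually_le_1 : exists t, 0 < t /\ repro t <= 1.
Proof.
  destruct (classic (exists t, 0 < t /\ repro t <= 1)) as [Hex | Hnot]; [exact Hex|].
  exfalso.
  assert (Habove : forall t, 0 < t -> 1 < repro t).
  { intros t Ht. apply Rnot_le_lt. intros Hle. apply Hnot. exists t. split; assumption. }
  assert (Hy_ge : forall t, 0 <= t -> y0 <= y t).
  { intros t [Ht | <-]; [| rewrite y_at_0; lra].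
    rewrite <- y_at_0. left. apply y_increasing; [lra | exact Ht |].
    intros c Hc. apply Habove. lra. }
  set (T := 2 / (gamma * y0)).
  assert (HT : gamma * y0 * T = 2) by (unfold T; field; lra).
  assert (HT0 : 0 < T) by (unfold T; apply Rdiv_lt_0_compat; nra).
  destruct (MVT_nonneg x dx 0 T x_derive x_continuous ltac:(lra) HT0) as [c [Hc E]].
  pose proof (Habove c ltac:(lra)). pose proof (Hy_ge c ltac:(lra)).
  assert (Hry : y0 <= repro c * y c) by nra.
  assert (gamma * T * y0 <= gamma * T * (repro c * y c))
    by (apply Rmult_le_compat_l; [nra | exact Hry]).
  pose proof (traj_inS 0 ltac:(lra)) as HS0. pose proof (traj_inS T ltac:(lra)) as HST.
  unfold dx, inS in *. lra.
Qed.

Lemma repro_crosses_1 : 1 < repro 0 -> exists m, 0 < m /\ repro m = 1.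
Proof.
  intros H0. destruct repro_eventually_le_1 as [t1 [Ht1 Hle]].
  destruct Hle as [Hlt | Heq]; [| exists t1; split; assumption].
  destruct (last_zero (fun t => -1 * (repro t - 1)) 0 t1 ltac:(lra) Ht1 ltac:(lra) ltac:(lra))
    as [m [Hm [Hzero _]]].
  { intros c Hc. apply continuous_nonneg_mult;
      [apply continuous_nonneg_const | apply repro_minus_1_continuous; lra]. }
  exists m. split; [| lra].
  destruct Hm as [[Hm | <-] _]; [exact Hm | lra].
Qed.

Lemma repro_at_0 : repro 0 = Rnum gamma beta x0 y0.
Proof. unfold repro. rewrite x_at_0, y_at_0. reflexivity. Qed.

Lemma y_strictly_decreasing : Rnum gamma beta x0 y0 <= 1 ->
  forall s t, 0 <= s -> s < t -> y t < y s.
Proof.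
  rewrite <- repro_at_0. intros H0 s t Hs Hst.
  apply y_decreasing; [exact Hs | exact Hst |].
  intros c Hc. apply (repro_stays_below 0); lra.
Qed.

Lemma y_unimodal : Rnum gamma beta x0 y0 > 1 ->
  exists th, 0 <= th /\
    (forall s t, 0 <= s -> s < t -> t <= th -> y s < y t) /\
    (forall s t, th <= s -> s < t -> y t < y s).
Proof.
  rewrite <- repro_at_0. intros H0.
  destruct (repro_crosses_1 H0) as [m [Hm Hone]].
  exists m. split; [lra | split].
  - intros s t Hs Hst Htm. apply y_increasing; [exact Hs | exact Hst |].
    intros c Hc. apply Rnot_le_lt. intros Hle.
    pose proof (repro_stays_below c m ltac:(lra) ltac:(lra) Hle). lra.
  - intros s t Hs Hst. apply y_decreasing; [lra | exact Hst |].
    intros c Hc. apply (repro_stays_below m); lra.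
Qed.

End BFSIR_trajectory.

Theorem proposition2 (gamma : R) (beta bx by_ : R -> R -> R)
  (x0 y0 : R) (x y : R -> R) :
  0 < gamma ->
  (forall a b, inS a b -> 0 < beta a b) ->
  C1_on_S beta bx by_ ->
  (forall a b, inS a b -> a * bx a b + beta a b > 0) ->
  inS x0 y0 -> 0 < y0 ->
  is_BFSIR_solution gamma beta x0 y0 x y ->
  (Rnum gamma beta x0 y0 <= 1 ->
     forall s t, 0 <= s -> s < t -> y t < y s) /\
  (Rnum gamma beta x0 y0 > 1 ->
     exists th, 0 <= th /\
       (forall s t, 0 <= s -> s < t -> t <= th -> y s < y t) /\
       (forall s t, th <= s -> s < t -> y t < y s)).
Proof.
  intros Hgamma Hbeta HC1 Hmono _ Hy0 Hsol.
  split; [eapply y_strictly_decreasing | eapply y_unimodal]; eassumption.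
Qed.
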